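(* Let $m\ge 1$ and $n\geq 2m$ be integers, and let $p,q$ be real numbers with $0<p\leq q$ and $0<p+q<1$. Then the minimum discrepancy of $C_{n,m}$ satisfies $$\delta(C_{n,m})\geq\min\{m^2,\ (1+\gamma)m\},$$ where $\gamma=\gamma_{p,q}=\log_{\frac{q}{1-p}}\left(\frac{p}{1-q}\right)$.
   Context: For integers $n\geq 2$, $N=\binom{n}{2}$ and $1\leq m\leq n$, the community code $C_{n,m}\subseteq\mathbb{F}_2^N$ consists of exactly those binary vectors of length $N$ that are the upper-triangular (off-diagonal) part of the adjacency matrix of a simple undirected graph on the labeled vertex set $\{1,\ldots,n\}$ which is a disjoint union of cliques, each clique having at least $m$ vertices. For $\mathbf{x},\mathbf{y}\in\mathbb{F}_2^N$ and $a,b\in\mathbb{F}_2$ let $d_{ab}(\mathbf{y},\mathbf{x})=|\{i: y_i=a,\ x_i=b\}|$. The discrepancy (associated with a binary asymmetric channel with crossover probabilities $p$ for $0\to1$ and $q$ for $1\to0$) is $\delta(\mathbf{y},\mathbf{x})=\gamma\, d_{10}(\mathbf{y},\mathbf{x})+d_{01}(\mathbf{y},\mathbf{x})$ with $\gamma=\log_{\frac{q}{1-p}}\left(\frac{p}{1-q}\right)$ (one has $\gamma\ge 1$). The minimum discrepancy $\delta(C)$ of a code $C$ is the minimum of $\delta(\mathbf{y},\mathbf{x})$ over all ordered pairs of distinct codewords $\mathbf{x},\mathbf{y}\in C$. *)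

From HB Require Import structures.
From mathcomp Require Import all_boot all_order all_algebra.
From mathcomp Require Import all_classical all_reals all_analysis.
Set Implicit Arguments. Unset Strict Implicit. Unset Printing Implicit Defensive.
Import Order.TTheory GRing.Theory Num.Theory.
Local Open Scope ring_scope.

(* Coordinates of F_2^N, N = binom(n,2): unordered pairs {i,j}, i<j, of 'I_n. *)
Definition upair (n : nat) := {e : 'I_n * 'I_n | (e.1 < e.2)%N}.

Definition word (n : nat) := {ffun upair n -> bool}.

(* The upper-triangular part of the adjacency matrix of the graph on 'I_n
   that is the disjoint union of the cliques given by the blocks of P
   (i ~ j iff i != j and i, j lie in the same block). *)
Definition clique_union_word (n : nat) (P : {set {set 'I_n}}) : word n :=
  [ffun e : upair n => finset.pblock P (val e).1 == finset.pblock P (val e).2].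

(* A graph is a disjoint union of cliques each with at least m vertices iff
   its cliques form a partition of the vertex set with all blocks of size >= m. *)
Definition community_code (n m : nat) : {set word n} :=
  [set x : word n | [exists P : {set {set 'I_n}},
     [&& finset.partition P [set: 'I_n], [forall B in P, (m <= #|B|)%N] &
         x == clique_union_word P]]].

Definition dab (n : nat) (a b : bool) (y x : word n) : nat :=
  #|[set e : upair n | (y e == a) && (x e == b)]|.

Definition logb {R : realType} (b a : R) : R := ln a / ln b.

Definition gamma_pq {R : realType} (p q : R) : R :=
  logb (q / (1 - p)) (p / (1 - q)).

Definition discrepancy {R : realType} (gamma : R) (n : nat) (y x : word n) : R :=
  gamma * (dab true false y x)%:R + (dab false true y x)%:R.

From mathcomp Require Import all_boot all_order all_algebra.
From mathcomp Require Import reals exp.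
From mathcomp Require Import zify ring lra.

(* Let X and Y be the block maps of the partitions behind x and y, so that d_10
   counts the pairs joined by Y but split by X, and d_01 the converse.  The key
   fact is that d_10 < m forces d_01 >= m^2.  If every block of Y lies in a
   block of X, some block of X contains two blocks B, B' of Y.  Otherwise a
   block B of Y meeting two blocks of X already contributes at least m to d_10,
   so it is the only such block, and no block of X meeting B lies inside B
   (it would contribute its size >= m).  Either way every point of B shares its
   X-block with a whole Y-block outside B, whence d_01 >= |B| m >= m^2.  By
   symmetry d_01 < m forces d_10 >= m^2, and otherwise the discrepancy is at
   least (1 + gamma) m; finally gamma >= 1 since p/(1-q) <= q/(1-p) < 1. *)
Import Order.TTheory GRing.Theory Num.Theory.
Set Implicit Arguments. Unset Strict Implicit. Unset Printing Implicit Defensive.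

Lemma leq_sum_in (T : finType) (A : {pred T}) (F : T -> nat) :
  \sum_(a in A) F a <= \sum_a F a.
Proof. by rewrite big_mkcond; apply: leq_sum => a _; case: (a \in A). Qed.

Lemma leq_sum_disjoint (T : finType) (A B : {pred T}) (F : T -> nat) :
  [disjoint A & B] -> \sum_(a in A) F a + \sum_(a in B) F a <= \sum_a F a.
Proof. by move=> dAB; rewrite -bigU //; apply: leq_sum_in. Qed.

Section BlockMaps.
Variable T : finType.
Implicit Types (X Y : T -> {set T}) (a b : T).

(* Exactly the maps sending each point to its block in a partition of [T]. *)
Definition block_map X := forall a b, (b \in X a) = (X a == X b).

Lemma block_map_refl X : block_map X -> forall a, a \in X a.
Proof. by move=> hX a; rewrite hX. Qed.

Lemma block_map_eq X : block_map X -> forall {a b}, b \in X a -> X b = X a.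
Proof. by move=> hX a b; rewrite hX => /eqP. Qed.

Lemma block_map_sym X : block_map X -> forall a b, (b \in X a) = (a \in X b).
Proof. by move=> hX a b; rewrite !hX eq_sym. Qed.

Lemma block_map_disjoint X : block_map X -> forall {a b}, X a != X b -> [disjoint X a & X b].
Proof.
move=> hX a b; apply: contraR => /pred0Pn [c /andP [caX cbX]].
by rewrite -(block_map_eq hX caX) (block_map_eq hX cbX).
Qed.

Lemma pblock_block_map (P : {set {set T}}) :
  partition P [set: T] -> block_map (pblock P).
Proof.
move=> /and3P [/eqP coverP trivP _] a b; apply/idP/eqP => [bPa | ->].
  by rewrite (same_pblock trivP bPa).
by rewrite mem_pblock coverP inE.
Qed.

Lemma pblock_card_ge (P : {set {set T}}) m :
  partition P [set: T] -> [forall B in P, m <= #|B|] -> forall a, m <= #|pblock P a|.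
Proof.
move=> /and3P [/eqP coverP _ _] /forall_inP P_ge a.
by apply/P_ge/pblock_mem; rewrite coverP inE.
Qed.

(* Ordered pairs in a common block of [Y] but in different blocks of [X]. *)
Definition merged X Y := \sum_a #|Y a :\: X a|.

Section Merged.
Variables (m : nat) (X Y : T -> {set T}).
Hypotheses (hX : block_map X) (hY : block_map Y).
Hypotheses (X_ge : forall a, m <= #|X a|) (Y_ge : forall a, m <= #|Y a|).

Lemma sum_block_merged_ge k :
  2 * (#|Y k :&: X k| * #|Y k :\: X k|) <= \sum_(a in Y k) #|Y a :\: X a|.
Proof.
rewrite (big_setID (X k)) /= mul2n -addnn.
have -> : \sum_(a in Y k :&: X k) #|Y a :\: X a|
        = \sum_(a in Y k :&: X k) #|Y k :\: X k|.
  apply: eq_bigr => a; rewrite in_setI => /andP [aY aX].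
  by rewrite (block_map_eq hY aY) (block_map_eq hX aX).
rewrite sum_nat_const leq_add2l mulnC -sum_nat_const.
apply: leq_sum => a; rewrite in_setD => /andP [aX aY].
rewrite (block_map_eq hY aY); apply/subset_leq_card/subsetP => b.
rewrite !inE => /andP [bY bX]; rewrite bY andbT.
apply: contraNN aX => bXa; by rewrite (block_map_sym hX) -(block_map_eq hX bXa)
  (block_map_eq hX bX) block_map_refl.
Qed.

Lemma split_block_merged_ge k :
  ~~ (Y k \subset X k) -> m <= \sum_(a in Y k) #|Y a :\: X a|.
Proof.
case/subsetPn => l lY lX.
have in_YX : 0 < #|Y k :&: X k|.
  by apply/card_gt0P; exists k; rewrite in_setI !block_map_refl.
have out_YX : 0 < #|Y k :\: X k|.
  by apply/card_gt0P; exists l; rewrite in_setD lY lX.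
have := sum_block_merged_ge k; have := cardsID (X k) (Y k); have := Y_ge k; nia.
Qed.

Lemma escape_card_ge a t :
  t \in X a -> t \notin Y a -> Y t \subset X t -> m <= #|X a :\: Y a|.
Proof.
move=> tX tY YtX; apply: leq_trans (Y_ge t) _.
apply/subset_leq_card/subsetP => b bYt; rewrite in_setD.
rewrite -(block_map_eq hX tX) (subsetP YtX) // andbT.
apply: contraNN tY => bYa.
by rewrite (block_map_sym hY) -(block_map_eq hY bYt) (block_map_eq hY bYa) block_map_refl.
Qed.

Lemma sum_mem_card (A B : {set T}) : \sum_(b in B) (b \in A : nat) = #|A :&: B|.
Proof.
rewrite -sum1_card [LHS]big_mkcond [RHS]big_mkcond; apply: eq_bigr => b _.
by rewrite in_setI; case: (b \in A); case: (b \in B).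
Qed.

Lemma merged_ge_block_escapes c : 2 * \sum_(a in Y c) #|X a :\: Y c| <= merged Y X.
Proof.
rewrite mul2n -addnn /merged [leqRHS](bigID (mem (Y c))) /=.
apply: leq_add; first by apply/eq_leq/eq_bigr => a aY; rewrite (block_map_eq hY aY).
have -> : \sum_(a in Y c) #|X a :\: Y c|
        = \sum_(b in ~: Y c) #|X b :&: Y c|.
  under eq_bigr => a _ do rewrite setDE -sum_mem_card.
  rewrite exchange_big; apply: eq_bigr => b _; rewrite -sum_mem_card.
  by apply: eq_bigr => a _; rewrite (block_map_sym hX).
rewrite (eq_bigl (fun b => b \notin Y c)) => [|b]; last by rewrite in_setC.
apply: leq_sum => b bY; rewrite setDE subset_leq_card // setIS // -disjoints_subset.
by apply: block_map_disjoint => //; apply: contraNneq bY => ->; apply: block_map_refl.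
Qed.

Lemma merged_ge_sq_of_escapes c :
  (forall a, a \in Y c -> m <= #|X a :\: Y c|) -> 2 * m ^ 2 <= merged Y X.
Proof.
move=> escape; apply: leq_trans (merged_ge_block_escapes c); rewrite leq_mul2l /=.
apply: (@leq_trans (#|Y c| * m)); first by rewrite leq_mul2r Y_ge orbT.
by rewrite -sum_nat_const; apply: leq_sum.
Qed.

Section FewMerged.
Hypothesis merged_lt : merged X Y < 2 * m.

Lemma split_block_unique k l :
  ~~ (Y k \subset X k) -> ~~ (Y l \subset X l) -> Y k = Y l.
Proof.
move=> split_k split_l; apply/eqP; apply: contraTT merged_lt => neq.
rewrite -leqNgt mul2n -addnn.
apply: leq_trans (leq_sum_disjoint _ (block_map_disjoint hY neq)).
by apply: leq_add; apply: split_block_merged_ge.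
Qed.

Lemma sub_block_eq a : X a \subset Y a -> Y a \subset X a.
Proof.
move=> XY; apply: contraTT merged_lt => /subsetPn [b bY bX]; rewrite -leqNgt.
have b_out : 0 < #|Y a :\: X a| by apply/card_gt0P; exists b; rewrite in_setD bY bX.
have := sum_block_merged_ge a; have := leq_sum_in (Y a) (fun a => #|Y a :\: X a|).
rewrite (setIidPr XY); have := X_ge a; rewrite /merged; nia.
Qed.

Lemma merged_lt_ge_sq : (exists v, X v != Y v) -> 2 * m ^ 2 <= merged Y X.
Proof.
move=> [v XYv]; case: (boolP [forall a, Y a \subset X a]) => [/forallP refines | ].
  have /subsetPn [t tX tY] : ~~ (X v \subset Y v).
    by apply: contra XYv => XY; rewrite eqEsubset XY refines.
  apply: (merged_ge_sq_of_escapes (c := v)) => a aY; rewrite -(block_map_eq hY aY).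
  apply: (@escape_card_ge _ t); rewrite ?(block_map_eq hY aY) //.
  by rewrite (block_map_eq hX (subsetP (refines v) a aY)).
move=> /forallPn [i split_i]; apply: (merged_ge_sq_of_escapes (c := i)) => a aY.
rewrite -(block_map_eq hY aY).
have /subsetPn [t tX tY] : ~~ (X a \subset Y a).
  apply: contra split_i => /sub_block_eq YXa.
  have iXa : i \in X a by rewrite (subsetP YXa) // (block_map_sym hY).
  by rewrite -(block_map_eq hY aY) (block_map_eq hX iXa).
apply: (escape_card_ge tX tY); apply: contraR tY => split_t.
by rewrite (block_map_eq hY aY) -(split_block_unique split_t split_i) block_map_refl.
Qed.

End FewMerged.
End Merged.
End BlockMaps.

Lemma sum_card_upair n (r : rel 'I_n) : symmetric r -> irreflexive r ->
  \sum_a #|[set b | r a b]| = 2 * #|[set e : upair n | r (val e).1 (val e).2]|.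
Proof.
move=> r_sym r_irr; set E := [set e : upair n | _].
have -> : \sum_a #|[set b | r a b]| = #|[set ab : 'I_n * 'I_n | r ab.1 ab.2]|.
  under eq_bigr => a _ do rewrite -sum1dep_card.
  by rewrite pair_big_dep sum1dep_card.
pose swap (ab : 'I_n * 'I_n) := (ab.2, ab.1).
have swapK : involutive swap by case.
have val_lt ab : ab \in val @: E -> ab.1 < ab.2.
  by case/imsetP => e _ ->; apply: (valP e).
have -> : [set ab | r ab.1 ab.2] = val @: E :|: swap @: (val @: E).
  apply/setP => -[a b]; rewrite !inE /=; apply/idP/orP => [rab | ].
    case: (ltngtP a b) => [ab | ba | /val_inj eq_ab].
    - by left; apply/imsetP; exists (exist _ (a, b) ab); rewrite ?inE.
    - right; apply/imsetP; exists (b, a) => //.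
      by apply/imsetP; exists (exist _ (b, a) ba); rewrite ?inE /= 1?r_sym.
    - by rewrite eq_ab r_irr in rab.
  case=> /imsetP [x]; last case/imsetP => e + ->.
    by case: x => -[a' b'] ? /=; rewrite inE /= => ? [-> ->].
  by case: e => -[a' b'] ? /=; rewrite inE /= => ? [-> ->]; rewrite r_sym.
rewrite cardsU disjoint_setI0 ?cards0 ?subn0 ?card_imset ?addnn ?mul2n //.
- exact: val_inj.
- exact: (can_inj swapK).
apply/pred0P => ab; apply/andP => -[/val_lt lt_ab].
move=> /imsetP [x /val_lt lt_x ab_x].
by move: lt_ab; rewrite ab_x /= ltnNge ltnW.
Qed.

Lemma dab_swap n (y x : word n) : dab false true y x = dab true false x y.
Proof. by apply: eq_card => e; rewrite !inE andbC. Qed.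

Lemma dab_clique_union n (Px Py : {set {set 'I_n}}) :
  partition Px [set: 'I_n] -> partition Py [set: 'I_n] ->
  2 * dab true false (clique_union_word Py) (clique_union_word Px)
  = merged (pblock Px) (pblock Py).
Proof.
move=> /pblock_block_map hX /pblock_block_map hY.
pose r a b := (pblock Py a == pblock Py b) && (pblock Px a != pblock Px b).
rewrite /merged (eq_bigr (fun a => #|[set b | r a b]|)) => [|a _]; last first.
  by apply: eq_card => b; rewrite !inE hX hY andbC.
rewrite sum_card_upair => [|a b|a]; last by rewrite /r !eqxx.
  by rewrite /dab; congr (_ * _); apply: eq_card => e; rewrite !inE !ffunE eqb_id eqbF_neg.
by rewrite /r eq_sym [pblock Px a == _]eq_sym.
Qed.

Local Open Scope ring_scope.

Lemma min_sq_linear_le (R : realDomainType) (g : R) (m d10 d01 : nat) : 1 <= g ->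
  (d10 < m -> m ^ 2 <= d01)%N -> (d01 < m -> m ^ 2 <= d10)%N ->
  Num.min ((m ^ 2)%:R : R) ((1 + g) * m%:R) <= g * d10%:R + d01%:R.
Proof.
move=> g_ge1 small10 small01; rewrite ge_min.
have d10_ge0 : 0 <= d10%:R :> R := ler0n _ _.
have d01_ge0 : 0 <= d01%:R :> R := ler0n _ _.
case: (ltnP d10 m) => [/small10 | m_le10].
  by rewrite -(ler_nat R) => h; apply/orP; left; nra.
case: (ltnP d01 m) => [/small01 | m_le01].
  by rewrite -(ler_nat R) => h; apply/orP; left; nra.
move: m_le10 m_le01; rewrite -!(ler_nat R) => h10 h01; apply/orP; right; nra.
Qed.

Lemma gamma_pq_ge1 (R : realType) (p q : R) :
  0 < p -> p <= q -> p + q < 1 -> 1 <= gamma_pq p q.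
Proof.
move=> p0 pq pq1.
have h1p : 0 < 1 - p by lra.
have h1q : 0 < 1 - q by lra.
have A0 : 0 < p / (1 - q) by apply: divr_gt0.
have B0 : 0 < q / (1 - p) by apply: divr_gt0; lra.
have B1 : q / (1 - p) < 1 by rewrite ltr_pdivrMr // mul1r; lra.
have AB : p / (1 - q) <= q / (1 - p).
  rewrite -subr_ge0.
  have -> : q / (1 - p) - p / (1 - q) = (q * (1 - q) - p * (1 - p)) / ((1 - p) * (1 - q)).
    by field; apply/andP; split; rewrite lt0r_neq0.
  (* the numerator is (q - p) (1 - p - q) *)
  apply: divr_ge0; last by apply: mulr_ge0; lra.
  nra.
have lnB : ln (q / (1 - p)) < 0 by apply: ln_lt0; rewrite B0 B1.
have lnAB : ln (p / (1 - q)) <= ln (q / (1 - p)) by rewrite ler_ln ?posrE.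
by rewrite /gamma_pq /logb ler_ndivlMr // mul1r.
Qed.

Theorem theorem2 (R : realType) (n m : nat) (p q : R) :
  (1 <= m)%N -> (2 * m <= n)%N ->
  0 < p -> p <= q -> 0 < p + q -> p + q < 1 ->
  forall x y : word n,
    x \in community_code n m -> y \in community_code n m -> x != y ->
    Num.min ((m ^ 2)%:R : R) ((1 + gamma_pq p q) * m%:R)
      <= discrepancy (gamma_pq p q) y x.
Proof.
move=> _ _ p_gt0 p_le_q _ pq_lt1 x y.
rewrite !inE => /existsP [Px /and3P [Px_part Px_ge /eqP ->]].
move=> /existsP [Py /and3P [Py_part Py_ge /eqP ->]] xy.
have hX := pblock_block_map Px_part; have X_ge := pblock_card_ge Px_part Px_ge.
have hY := pblock_block_map Py_part; have Y_ge := pblock_card_ge Py_part Py_ge.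
have XY : exists v, pblock Px v != pblock Py v.
  apply/existsP; apply: contraR xy => /existsPn eq_XY; apply/eqP/ffunP => e.
  by rewrite !ffunE !(eqP (negbNE (eq_XY _))).
have YX : exists v, pblock Py v != pblock Px v.
  by case: XY => v XYv; exists v; rewrite eq_sym.
rewrite /discrepancy; apply: min_sq_linear_le; first exact: gamma_pq_ge1.
- move=> small; rewrite dab_swap -(leq_pmul2l (isT : (0 < 2)%N)) dab_clique_union //.
  by apply: merged_lt_ge_sq => //; rewrite -dab_clique_union // ltn_pmul2l.
- move=> small; rewrite -(leq_pmul2l (isT : (0 < 2)%N)) dab_clique_union //.
  by apply: merged_lt_ge_sq => //; rewrite -dab_clique_union // -dab_swap ltn_pmul2l.
Qed.
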